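(* Let $T$ be a tree of order $n$, and let $d_i$ denote the number of dominating sets of $T$ of size $i$. Then $$d_{\left\lceil\frac{n+2\Gamma(T)-2}{3}\right\rceil}\ge\cdots\ge d_{n-1}\ge d_n.$$
   Context: A dominating set of a graph $G=(V,E)$ is a set $S\subseteq V$ such that every vertex is in $S$ or adjacent to a vertex of $S$; it is minimal if no proper subset is dominating. $\Gamma(T)$ is the maximum size of a minimal dominating set of $T$. *)

From mathcomp Require Import all_boot.
Set Implicit Arguments. Unset Strict Implicit. Unset Printing Implicit Defensive.

Definition simple_graph (T : finType) (e : rel T) : Prop :=
  symmetric e /\ irreflexive e.

Definition edges (T : finType) (e : rel T) : {set {set T}} :=
  [set [set x; y] | x in T, y in T & e x y].

Definition is_tree (T : finType) (e : rel T) : Prop :=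
  [/\ simple_graph e, 0 < #|T|,
      (forall x y : T, connect e x y) & #|edges e| = #|T| - 1].

Definition dominating (T : finType) (e : rel T) (S : {set T}) : bool :=
  [forall v : T, (v \in S) || [exists u in S, e u v]].

Definition minimal_dominating (T : finType) (e : rel T) (S : {set T}) : bool :=
  dominating e S && [forall S' : {set T}, (S' \proper S) ==> ~~ dominating e S'].

Definition upper_domination (T : finType) (e : rel T) : nat :=
  \max_(S : {set T} | minimal_dominating e S) #|S|.

Definition num_dom (T : finType) (e : rel T) (i : nat) : nat :=
  #|[set S : {set T} | dominating e S & #|S| == i]|.

Definition ceil_div (a b : nat) : nat := (a + b.-1) %/ b.

(* Call a vertex v of a dominating set S removable if S :\ v still dominates.
   Deleting a removable vertex maps the pairs (S, v) with #|S| = i.+1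
   injectively to pairs (S', v) with #|S'| = i and v \notin S', so
   (n - i) d_(i+1) <= sum_S #|removable S| <= (n - i) d_i as soon as every
   such S has at least n - i removable vertices.
   A non-removable vertex of S either has a neighbour in the set P of vertices
   outside S dominated exactly once, or is isolated in S :|: P; call the
   latter vertices Z.  A tree is bipartite, so Z together with the larger
   colour class of (S :|: P) :\: Z is an independent set of size at least
   (#|S| + #|P| + #|Z|) / 2, and a maximum independent set is a minimal
   dominating set, so this is at most Gamma.  Hence
   #|S| + #|S :\: removable S| <= 2 Gamma, which yields n - i removable
   vertices once 3 i >= n + 2 Gamma - 2. *)

From mathcomp Require Import all_boot.
From mathcomp Require Import zify.
Set Implicit Arguments. Unset Strict Implicit. Unset Printing Implicit Defensive.

Section BreadthFirst.
Variables (T : finType) (e : rel T) (r : T).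
Hypothesis r_connect : forall v, connect e r v.

Fixpoint ball (k : nat) : {set T} :=
  if k is k'.+1 then ball k' :|: [set v | [exists u in ball k', e u v]] else [set r].

Lemma ballS k v : (v \in ball k.+1) = (v \in ball k) || [exists u in ball k, e u v].
Proof. by rewrite /= !inE. Qed.

Lemma ball_path x p k :
  x \in ball k -> path e x p -> last x p \in ball (k + size p).
Proof.
elim: p x k => [|y p IHp] x k /=; first by rewrite addn0.
move=> xk /andP[exy yp]; rewrite addnS -addSn; apply: IHp yp.
by rewrite ballS; apply/orP; right; apply/exists_inP; exists x.
Qed.

Lemma ball_exhaustive v : exists k, v \in ball k.
Proof.
case/connectP: (r_connect v) => p rp ->; exists (0 + size p).
by apply: ball_path rp; rewrite inE.
Qed.

Definition depth v := ex_minn (ball_exhaustive v).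

Lemma depth_ball v : v \in ball (depth v).
Proof. by rewrite /depth; case: ex_minnP. Qed.

Lemma depth_min v k : v \in ball k -> depth v <= k.
Proof. by rewrite /depth; case: ex_minnP => m _ minm /minm. Qed.

Lemma depth_edge u v : e u v -> depth v <= (depth u).+1.
Proof.
by move=> euv; apply: depth_min; rewrite ballS; apply/orP; right;
  apply/exists_inP; exists u; rewrite ?depth_ball.
Qed.

Lemma depth_eq0 v : (depth v == 0) = (v == r).
Proof.
apply/eqP/eqP => [d0 | ->]; first by have := depth_ball v; rewrite d0 inE => /eqP.
by apply/eqP; rewrite -leqn0 depth_min // inE.
Qed.

Lemma exists_parent v :
  v != r -> exists u, e u v && (depth u == (depth v).-1).
Proof.
rewrite -depth_eq0 => dv0; have := depth_ball v.
case E: (depth v) dv0 => [//|k] _.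
rewrite ballS => /orP[/depth_min | /exists_inP[u uk euv]]; first by rewrite E ltnn.
by exists u; rewrite euv eqn_leq depth_min //= -ltnS -E depth_edge.
Qed.

Definition parent v := odflt r [pick u | e u v && (depth u == (depth v).-1)].

Lemma parentP v : v != r -> e (parent v) v /\ (depth (parent v)).+1 = depth v.
Proof.
move=> vr; rewrite /parent; case: pickP => [u /andP[euv /eqP ->] | none].
  by split=> //; rewrite prednK // lt0n depth_eq0.
by case: (exists_parent vr) => u; rewrite none.
Qed.

Definition parent_edges := [set [set v; parent v] | v in [set~ r]].

Lemma parent_edges_sub : parent_edges \subset edges e.
Proof.
apply/subsetP => _ /imsetP[v + ->]; rewrite in_setC1 => /parentP[epv _].
by apply/imset2P; exists (parent v) v; rewrite ?inE // setUC.
Qed.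

Lemma card_parent_edges : #|parent_edges| = #|T|.-1.
Proof.
rewrite card_in_imset ?cardsC1 // => x y; rewrite !in_setC1.
move=> /parentP[_ dx] /parentP[_ dy] fxy.
have : x \in [set y; parent y] by rewrite -fxy set21.
have : y \in [set x; parent x] by rewrite fxy set21.
rewrite !inE => /orP[/eqP // | /eqP ypx] /orP[/eqP // | /eqP xpy].
by move: dx dy; rewrite -ypx -xpy; lia.
Qed.

Lemma parent_edges_depth u v :
  depth u = depth v -> [set u; v] \notin parent_edges.
Proof.
move=> duv; have depth_uv x : x \in [set u; v] -> depth x = depth u.
  by rewrite !inE => /orP[] /eqP ->.
apply/imsetP => [[w]]; rewrite in_setC1 => /parentP[_ dw] uvw.
by move: dw; rewrite (depth_uv w) ?(depth_uv (parent w)) ?uvw ?set21 ?set22; lia.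
Qed.

(* The parent edges already account for #|T| - 1 edges, so an edge between
   vertices of equal depth would be one too many. *)
Lemma depth_edge_neq u v :
  #|edges e| = #|T| - 1 -> e u v -> depth u != depth v.
Proof.
move=> card_e euv; apply/eqP => duv.
have uv_edge : [set u; v] \in edges e by apply/imset2P; exists u v; rewrite ?inE.
have : [set u; v] |: parent_edges \subset edges e.
  by rewrite subUset sub1set uv_edge parent_edges_sub.
have T_gt0 : 0 < #|T| by apply/card_gt0P; exists r.
by move/subset_leq_card; rewrite cardsU1 parent_edges_depth // card_parent_edges card_e; lia.
Qed.

End BreadthFirst.

Lemma connected_two_coloring (T : finType) (e : rel T) :
  symmetric e -> (forall x y, connect e x y) -> 0 < #|T| ->
  #|edges e| = #|T| - 1 -> exists c : T -> bool, {homo c : u v / e u v >-> u != v}.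
Proof.
move=> esym conn /card_gt0P[r _] card_e; exists (odd \o depth (conn r)) => u v euv /=.
have := depth_edge (conn r) euv; rewrite esym in euv; have := depth_edge (conn r) euv.
have := depth_edge_neq (conn r) card_e euv.
move: (depth _ u) (depth _ v) => du dv dvu_neq du_le dv_le.
have [->|->] : dv = du.+1 \/ du = dv.+1 by lia.
  by rewrite /=; case: (odd du).
by rewrite /=; case: (odd dv).
Qed.

Section Domination.
Variables (T : finType) (e : rel T).

Definition indep (I : {set T}) := [forall u in I, forall v in I, ~~ e u v].

Lemma indep_dominating_minimal I : indep I -> dominating e I -> minimal_dominating e I.
Proof.
move=> /forall_inP indI domI; rewrite /minimal_dominating domI /=.
apply/forallP => S'; apply/implyP => /properP[/subsetP S'I [x xI xS']].
apply/forallP => /(_ x); rewrite (negbTE xS') /= => /exists_inP[u uS' eux].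
by move: (indI u (S'I u uS')) => /forall_inP/(_ x xI); rewrite eux.
Qed.

Hypotheses (esym : symmetric e) (eirr : irreflexive e).

Lemma maximal_indep_dominating M :
  indep M -> (forall v, v \notin M -> ~~ indep (v |: M)) -> dominating e M.
Proof.
move=> /forall_inP indM maxM; apply/forallP => v; apply/orP.
case: (boolP (v \in M)) => [|vM]; [by left | right].
apply: contraR (maxM v vM) => /exists_inPn noN; apply/forall_inP => x.
move=> /setU1P[-> | xM]; apply/forall_inP => y /setU1P[-> | yM].
- by rewrite eirr.
- by rewrite esym noN.
- by rewrite noN.
- by move: (indM x xM) => /forall_inP->.
Qed.

Lemma indep_le_upper_domination I : indep I -> #|I| <= upper_domination e.
Proof.
move=> indI; have [M indM maxM] := arg_maxnP (fun M : {set T} => #|M|) indI.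
apply: leq_trans (maxM I indI) (leq_bigmax_cond _ _).
apply: indep_dominating_minimal => //; apply: maximal_indep_dominating => // v vM.
by apply/negP => /maxM; rewrite cardsU1 vM; lia.
Qed.

Lemma indepU A B : indep A -> indep B ->
  (forall a b, a \in A -> b \in B -> ~~ e a b) -> indep (A :|: B).
Proof.
move=> /forall_inP indA /forall_inP indB AB; apply/forall_inP => x.
move=> /setUP[xA | xB]; apply/forall_inP => y /setUP[yA | yB].
- by move/forall_inP: (indA x xA); apply.
- exact: AB.
- by rewrite esym AB.
- by move/forall_inP: (indB x xB); apply.
Qed.

Definition removable (S : {set T}) := [set v in S | dominating e (S :\ v)].

Definition once_dominated (S : {set T}) :=
  [set w | (w \notin S) && (#|[set u in S | e u w]| == 1)].

Definition with_private_nbr (S : {set T}) :=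
  [set v in S | [exists w in once_dominated S, e v w]].

Definition isolated_part (S : {set T}) :=
  [set v in S | [forall q in S :|: once_dominated S, ~~ e v q]].

Lemma nonremovable_sub S : dominating e S ->
  S :\: removable S \subset isolated_part S :|: with_private_nbr S.
Proof.
move=> domS; apply/subsetP => v /setDP[vS]; rewrite inE vS /= => /forallPn[x].
rewrite negb_or => /andP[xSv /exists_inPn x_undom].
rewrite in_setU; case: (boolP [exists w in once_dominated S, e v w]) => [hv | no_priv].
  by rewrite orbC inE vS hv.
have S_nbr_x u : u \in S -> e u x -> u = v.
  by move=> uS; apply: contraTeq => uv; apply: x_undom; rewrite !inE uv.
have x_v : x = v.
  apply: contraNeq no_priv => xv.
  have xS : x \notin S by move: xSv; rewrite !inE xv.
  have := forallP domS x; rewrite (negbTE xS) => /exists_inP[u uS eux].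
  have evx : e v x by rewrite -(S_nbr_x u).
  apply/exists_inP; exists x => //; rewrite inE xS; apply/cards1P; exists v.
  by apply/setP => y; rewrite !inE; apply/andP/eqP => [[] | ->]; [exact: S_nbr_x | rewrite vS].
apply/orP; left; rewrite inE vS; apply/forall_inP => q /setUP[qS | qP]; last first.
  by apply: (exists_inPn no_priv).
have [-> | qv] := eqVneq q v; first by rewrite eirr.
by rewrite esym -x_v; apply: x_undom; rewrite !inE qv.
Qed.

Lemma card_with_private_nbr S : #|with_private_nbr S| <= #|once_dominated S|.
Proof.
pose nbr w := odflt w [pick u in S | e u w].
have nbrE w u : w \in once_dominated S -> u \in S -> e u w -> nbr w = u.
  rewrite inE => /andP[_ /cards1P[z Nw]] uS euw.
  have Nw_z y : (y \in S) && e y w = (y == z) by rewrite -in_set1 -Nw inE.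
  have /eqP-> : u == z by rewrite -Nw_z uS euw.
  by rewrite /nbr; case: pickP => [y | /(_ z)]; rewrite Nw_z ?eqxx // => /eqP.
apply: leq_trans (leq_imset_card nbr _); apply: subset_leq_card.
apply/subsetP => v; rewrite inE => /andP[vS /exists_inP[w wP evw]].
by apply/imsetP; exists w; rewrite // (nbrE w v).
Qed.

Section TwoColoring.
Variable c : T -> bool.
Hypothesis c_proper : {homo c : u v / e u v >-> u != v}.

Lemma indep_color_class (X : {set T}) b : indep [set x in X | c x == b].
Proof.
apply/forall_inP => x; rewrite inE => /andP[_ /eqP cx]; apply/forall_inP => y.
by rewrite inE => /andP[_ /eqP cy]; apply/negP => /c_proper; rewrite cx cy eqxx.
Qed.

Lemma exists_indep_half (X : {set T}) :
  exists I : {set T}, [/\ I \subset X, indep I & #|X| <= 2 * #|I|].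
Proof.
pose class b := [set x in X | c x == b].
have cardX : #|class true| + #|class false| = #|X|.
  rewrite -(cardsID [set x | c x] X) /class.
  by apply: f_equal2; apply: eq_card => x; rewrite !inE ?eqb_id ?eqbF_neg // andbC.
have class_sub b : class b \subset X by apply/subsetP => x; rewrite inE => /andP[].
have [le_ft | lt_tf] := leqP #|class false| #|class true|.
  by exists (class true); split; rewrite ?indep_color_class //; lia.
by exists (class false); split; rewrite ?indep_color_class //; lia.
Qed.

Lemma exists_indep_isolated (Q Z : {set T}) : Z \subset Q ->
  (forall z q, z \in Z -> q \in Q -> ~~ e z q) ->
  exists2 I : {set T}, indep I & #|Q| + #|Z| <= 2 * #|I|.
Proof.
move=> ZQ Z_iso; have [J [JQZ indJ cardJ]] := exists_indep_half (Q :\: Z).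
have JQ : J \subset Q := subset_trans JQZ (subsetDl Q Z).
have indZ : indep Z.
  by apply/forall_inP => z zZ; apply/forall_inP => y /(subsetP ZQ); apply: Z_iso.
have /eqP cardZJ : #|Z :|: J| == #|Z| + #|J|.
  rewrite (leq_card_setU Z J).2 disjoint_sym disjoints_subset.
  by rewrite (subset_trans JQZ) // setDE subsetIr.
exists (Z :|: J); first by apply: indepU => // z j zZ /(subsetP JQ); apply: Z_iso.
by move: cardJ (subset_leq_card ZQ); rewrite cardZJ cardsDS //; lia.
Qed.

Lemma dominating_nonremovable_bound S : dominating e S ->
  #|S| + #|S :\: removable S| <= 2 * upper_domination e.
Proof.
move=> domS; set P := once_dominated S; set Z := isolated_part S.
have /eqP cardSP : #|S :|: P| == #|S| + #|P|.
  rewrite (leq_card_setU S P).2 disjoints_subset.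
  by apply/subsetP => w wS; rewrite !inE wS.
have ZSP : Z \subset S :|: P.
  by apply/subsetP => v; rewrite !inE => /andP[->].
have Z_iso z q : z \in Z -> q \in S :|: P -> ~~ e z q.
  by rewrite inE => /andP[_ /forall_inP]; apply.
have [I /indep_le_upper_domination leI cardI] := exists_indep_isolated ZSP Z_iso.
have nonremovable_le : #|S :\: removable S| <= #|Z| + #|P|.
  apply: leq_trans (subset_leq_card (nonremovable_sub domS)) _.
  by apply: leq_trans (leq_card_setU _ _).1 _; rewrite leq_add2l card_with_private_nbr.
by rewrite cardSP in cardI; lia.
Qed.

End TwoColoring.

End Domination.

Lemma sum_card_swap (I J : finType) (A : {set I}) (F : I -> {set J}) :
  \sum_(x in A) #|F x| = \sum_y #|[set x in A | y \in F x]|.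
Proof.
transitivity (\sum_(x in A) \sum_y (y \in F x : nat)).
  by apply: eq_bigr => x _; rewrite -sum1_card big_mkcond.
rewrite exchange_big; apply: eq_bigr => y _.
rewrite -sum1_card big_mkcond [RHS]big_mkcond /=; apply: eq_bigr => x _.
by rewrite inE; case: (x \in A); case: (y \in F x).
Qed.

Definition dom_sets (T : finType) (e : rel T) (k : nat) :=
  [set S : {set T} | dominating e S & #|S| == k].

Lemma num_domE (T : finType) (e : rel T) k : num_dom e k = #|dom_sets e k|.
Proof. by []. Qed.

Lemma sum_removable_le (T : finType) (e : rel T) k :
  \sum_(S in dom_sets e k.+1) #|removable e S| <= num_dom e k * (#|T| - k).
Proof.
have -> : num_dom e k * (#|T| - k) = \sum_(S in dom_sets e k) #|~: S|.
  rewrite num_domE -sum_nat_const; apply: eq_bigr => S; rewrite inE => /andP[_ /eqP <-].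
  by rewrite [RHS]cardsCs setCK.
rewrite !sum_card_swap; apply: leq_sum => v _.
rewrite -(@card_in_imset _ _ (fun S => S :\ v)); last first.
  move=> S1 S2; rewrite !inE => /and3P[_ v1 _] /and3P[_ v2 _] eqS.
  by rewrite -(setD1K v1) eqS setD1K.
apply/subset_leq_card/subsetP => _ /imsetP[S + ->].
rewrite !inE => /andP[/andP[_ /eqP cardS] /andP[vS domSv]].
have := cardsD1 v S; rewrite vS cardS add1n => -[->].
by rewrite domSv !eqxx.
Qed.

Lemma ceil_div_leq a b i : 0 < b -> (ceil_div a b <= i) = (a <= b * i).
Proof. by move=> b_gt0; rewrite /ceil_div -ltnS ltn_divLR //; lia. Qed.

Theorem theorem4p11 (T : finType) (e : rel T) :
  is_tree e ->
  forall i : nat,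
    ceil_div (#|T| + 2 * upper_domination e - 2) 3 <= i -> i < #|T| ->
    num_dom e i.+1 <= num_dom e i.
Proof.
case=> [[esym eirr] T_gt0 conn card_e] i; rewrite ceil_div_leq // => lo_i lt_iT.
have [c c_proper] := connected_two_coloring esym conn T_gt0 card_e.
rewrite -(@leq_pmul2r (#|T| - i)) ?subn_gt0 //.
apply: leq_trans (sum_removable_le e i).
rewrite num_domE -sum_nat_const; apply: leq_sum => S; rewrite inE => /andP[domS /eqP cardS].
have := dominating_nonremovable_bound esym eirr c_proper domS.
have : removable e S \subset S by apply/subsetP => v; rewrite inE => /andP[].
by move=> /cardsDS ->; rewrite cardS; lia.
Qed.
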